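(* Let $D$ be an instance all of whose tuples are endogenous ($D^n=D$), let $\mathcal{Q}$ be a monotone query, and let $\bar a\in\mathcal{Q}(D)$. A tuple $t$ is a view-conditioned cause for $\bar a$ if and only if there is $D'\subseteq D$ with $t\in(D\smallsetminus D')\subseteq D^n$ and $\mathcal{Q}(D')=\mathcal{Q}(D)\smallsetminus\{\bar a\}$.
   Context: A query $\mathcal{Q}$ is monotone if $D_1\subseteq D_2$ implies $\mathcal{Q}(D_1)\subseteq\mathcal{Q}(D_2)$; $D\models\mathcal{Q}(\bar b)$ means $\bar b\in\mathcal{Q}(D)$. Let $\mathcal{Q}(D)=\{\bar a_1,\dots,\bar a_n\}$ with $\bar a=\bar a_k$. A tuple $\tau\in D^n$ is a view-conditioned counterfactual cause for $\bar a_k$ in an instance $D''$ if $D''\smallsetminus\{\tau\}\not\models\mathcal{Q}(\bar a_k)$ and $D''\smallsetminus\{\tau\}\models\mathcal{Q}(\bar a_i)$ for all $i\neq k$. $\tau$ is a view-conditioned cause for $\bar a_k$ if there is $\Gamma\subseteq D^n$ such that $\tau$ is a view-conditioned counterfactual cause for $\bar a_k$ in $D\smallsetminus\Gamma$. A subinstance $D'\subseteq D$ with $\mathcal{Q}(D')=\mathcal{Q}(D)\smallsetminus\{\bar a\}$ is called a solution to the view side-effect-free problem for $\bar a$. *)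

From HB Require Import structures.
From mathcomp Require Import all_boot.
From mathcomp Require Import finmap.
Set Implicit Arguments. Unset Strict Implicit. Unset Printing Implicit Defensive.
Local Open Scope fset_scope.

(* Tuples of type T, answers of type A; an instance is a finite set of tuples.
   A query maps instances to (finite) sets of answer tuples. *)
Definition monotone_query (T A : choiceType) (Q : {fset T} -> {fset A}) : Prop :=
  forall D1 D2 : {fset T}, D1 `<=` D2 -> Q D1 `<=` Q D2.

Definition models (T A : choiceType) (Q : {fset T} -> {fset A}) (D : {fset T}) (b : A) : Prop :=
  b \in Q D.

Definition vc_counterfactual_cause (T A : choiceType) (Q : {fset T} -> {fset A})
    (D Dn : {fset T}) (a : A) (D'' : {fset T}) (tau : T) : Prop :=
  tau \in Dn /\
  ~ models Q (D'' `\ tau) a /\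
  (forall b, b \in Q D -> b != a -> models Q (D'' `\ tau) b).

Definition vc_cause (T A : choiceType) (Q : {fset T} -> {fset A})
    (D Dn : {fset T}) (a : A) (tau : T) : Prop :=
  exists Gamma : {fset T}, Gamma `<=` Dn /\
    vc_counterfactual_cause Q D Dn a (D `\` Gamma) tau.

From HB Require Import structures.
From mathcomp Require Import all_boot.
From mathcomp Require Import finmap.
Local Open Scope fset_scope.

(* For a monotone query, removing [tau] from a subinstance of [D] has exactly the
   view side effect "delete [a]" iff [tau] is a view-conditioned counterfactual
   cause there.  Hence a cause together with its contingency set yields the solution
   [D `\` Gamma `\ tau], and conversely a solution [D'] not containing [t] is
   reached with contingency set [D `\` D'], whose removal of [t] changes nothing. *)

Lemma vc_counterfactual_causeE {T A : choiceType} {Q : {fset T} -> {fset A}}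
    {D Dn D'' : {fset T}} {a : A} {tau : T} :
  monotone_query Q -> D'' `<=` D ->
  vc_counterfactual_cause Q D Dn a D'' tau <->
  tau \in Dn /\ Q (D'' `\ tau) = Q D `\ a.
Proof.
move=> mon sD''D; rewrite /vc_counterfactual_cause /models.
split=> [[tauDn [na keep]] | [tauDn QD'']]; split=> //.
- apply/fsetP=> b; rewrite in_fsetD1.
  have [-> | nba] /= := eqVneq b a; first exact/negbTE/negP.
  apply/idP/idP=> [bQ | /keep]; last exact.
  by apply: (fsubsetP (mon _ _ _)) bQ; apply: fsubset_trans (fsubsetDl _ _) sD''D.
- by rewrite QD'' fsetD11; split=> // b bQ nba; rewrite in_fsetD1 nba.
Qed.

Theorem proposition12 (T A : choiceType) (Q : {fset T} -> {fset A})
    (D Dn : {fset T}) (a : A) (t : T) :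
  Dn = D -> monotone_query Q -> a \in Q D ->
  (vc_cause Q D Dn a t <->
   exists D' : {fset T}, D' `<=` D /\ t \in D `\` D' /\ D `\` D' `<=` Dn /\
     Q D' = Q D `\ a).
Proof.
move=> -> mon _; split.
- move=> [Gamma [_ /(vc_counterfactual_causeE mon (fsubsetDl D Gamma))]].
  move=> [tD QD'']; exists (D `\` Gamma `\ t).
  split; first by apply: fsubset_trans (fsubsetDl _ _) (fsubsetDl _ _).
  by rewrite in_fsetD fsetD11 tD fsubsetDl.
- move=> [D' [sD'D [/fsetDP[tD tD'] [_ QD']]]].
  exists (D `\` D'); split; first exact: fsubsetDl.
  rewrite fsetDK //; apply/vc_counterfactual_causeE => //.
  by rewrite mem_fsetD1.
Qed.
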